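(* Let $m\ge3$ and let $T_m$ be the graph defined below. Then $1$ is a simple eigenvalue of $T_m$ if and only if $4\nmid m$ and $5\nmid m$.
   Context: For $m\ge3$, $T_m$ is the cubic graph on $2m^2$ vertices $\{x^+_{i,j},\,x^-_{i,j}\mid i,j\in\mathbb{Z}_m\}$ with edges $\{x^+_{i,j},x^+_{i,j+1}\}$, $\{x^-_{i,j},x^-_{i,j+1}\}$ and $\{x^+_{i,j},x^-_{j,i}\}$ for all $i,j\in\mathbb{Z}_m$. Eigenvalues are those of the adjacency matrix; simple means a $1$-dimensional eigenspace. *)

From HB Require Import structures.
From mathcomp Require Import all_boot all_order all_algebra all_field.
Set Implicit Arguments. Unset Strict Implicit. Unset Printing Implicit Defensive.
Import GRing.Theory Num.Theory.
Local Open Scope ring_scope.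

(* Vertices of T_m: (s, i, j) with s = true for x^+_{i,j}, s = false for x^-_{i,j};
   i, j range over Z_m, represented by 'I_m with cyclic successor ordS. *)
Definition Tvert (m : nat) : finType := (bool * 'I_m * 'I_m)%type.

(* Directed "generating" edges: {x^s_{i,j}, x^s_{i,j+1}} and {x^+_{i,j}, x^-_{j,i}}. *)
Definition Tgen (m : nat) (u v : Tvert m) : bool :=
  let: (s, i, j) := u in let: (t, k, l) := v in
  [|| (s == t) && (i == k) && (l == ordS j)
    | s && ~~ t && (k == j) && (l == i)].

Definition Tadj (m : nat) (u v : Tvert m) : bool := Tgen u v || Tgen v u.

Definition Tmx (m : nat) : 'M[algC]_#|Tvert m| :=
  \matrix_(a, b) (Tadj (enum_val a) (enum_val b))%:R.

Definition simple_eigenvalue (F : fieldType) (n : nat) (A : 'M[F]_n) (a : F) : Prop :=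
  \rank (eigenspace A a) = 1%N.

(* An eigenvector of T_m for the eigenvalue 1 is a pair of functions on Z_m x Z_m (the
   sheets x^+ and x^-) satisfying a three-term recurrence in each index.  Its discrete Fourier
   coefficient at a pair (z, w) of m-th roots of unity can be nonzero only if
   (1 - z - 1/z)(1 - w - 1/w) = 1.  The pair (1, 1) yields the eigenvector equal to 1 on x^+
   and -1 on x^-; the pair (i, i) when 4 | m, and (e^(2 pi i/5), e^(4 pi i/5)) when 5 | m,
   yield a second, independent one.  Conversely, applying the automorphisms of Q(e^(2 pi i/m)) to a
   solution other than (1, 1) gives 2 Re(z^k) <= 2/3 for every conjugate z^k of z.  For a
   prime p | m with p odd and p^2 | m, or p >= 7, the values 2 Re over the coset
   z * <z^(m/p)> have power sums 0, 2p and (for p <> 3) 0, which is incompatible with these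
   bounds unless z^(m/p) = 1.  By induction m divides 6, and there the equation is checked
   to have no other solution. *)

From HB Require Import structures.
From mathcomp Require Import all_boot all_order all_algebra all_field.
From mathcomp Require Import ring zify.
Set Implicit Arguments. Unset Strict Implicit. Unset Printing Implicit Defensive.
Import Order.TTheory GRing.Theory Num.Theory.
Local Open Scope ring_scope.

(** * Roots of unity solving the eigenvalue-1 equation *)

(* [dcos z] = 2 cos t for z = e^(i t). *)
Definition dcos (R : unitRingType) (z : R) := z + z^-1.

(* The condition for the Fourier mode (z, w) of T_m to carry the eigenvalue 1. *)
Definition mode1 (R : unitRingType) (z w : R) := (1 - dcos z) * (1 - dcos w) = 1.

Lemma mode1_sym (R : comUnitRingType) (z w : R) : mode1 z w -> mode1 w z.
Proof. by rewrite /mode1 mulrC. Qed.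

Lemma unity_root_neq0 (R : nzRingType) n (z : R) : (0 < n)%N -> z ^+ n = 1 -> z != 0.
Proof.
move=> n_gt0 zn; apply: contra_eq_neq zn => ->.
by rewrite expr0n gtn_eqF // eq_sym oner_eq0.
Qed.

Lemma unity_root_coprime (R : ringType) (z : R) a b :
  coprime a b -> z ^+ a = 1 -> z ^+ b = 1 -> z = 1.
Proof.
have [-> /eqP|a_gt0 /eqP co_ab za zb] := posnP a.
  by rewrite gcd0n => -> _; rewrite expr1.
have [c _] := Bezoutl b a_gt0; rewrite co_ab => /(expr_dvd za).
by rewrite exprD expr1 mulnC exprM zb expr1n mulr1.
Qed.

Lemma dcos_eq2 (F : fieldType) (z : F) : z != 0 -> dcos z = 2 -> z = 1.
Proof.
move=> z0 z2; have: (z - 1) ^+ 2 = z * (dcos z - 2).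
  by rewrite /dcos mulrBr mulrDr mulfV //; ring.
by rewrite z2 subrr mulr0 => /eqP; rewrite sqrf_eq0 subr_eq0 => /eqP.
Qed.

Lemma sum_expr_unity_root (F : fieldType) (v : F) p :
  v ^+ p = 1 -> v != 1 -> \sum_(j < p) v ^+ j = 0.
Proof.
move=> vp v_neq1; apply/eqP; move: (subrX1 v p); rewrite vp subrr => /esym/eqP.
by rewrite mulf_eq0 subr_eq0 (negbTE v_neq1).
Qed.

Lemma sum_coset_expr (F : fieldType) (z : F) p t k : prime p -> z ^+ (p * t) = 1 ->
  z ^+ t != 1 -> coprime k p -> \sum_(j < p) z ^+ (1 + j * t) ^+ k = 0.
Proof.
move=> p_prime zpt zt_neq1 co_kp; set v := z ^+ t ^+ k.
have vp : v ^+ p = 1.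
  by rewrite /v -!exprM (expr_dvd zpt) // mulnC dvdn_mul ?dvdn_mull.
have v_neq1 : v != 1.
  apply: contra_neq zt_neq1 => vk; apply: (unity_root_coprime co_kp vk).
  by rewrite -exprM mulnC.
rewrite (eq_bigr (fun j : 'I_p => z ^+ k * v ^+ j)) => [|j _]; last first.
  by rewrite exprD expr1 exprMn -!exprM; congr (_ * z ^+ _); nia.
by rewrite -mulr_sumr sum_expr_unity_root ?mulr0.
Qed.

Lemma dcos_sqr (F : fieldType) (y : F) : y != 0 -> dcos y ^+ 2 = y ^+ 2 + y^-1 ^+ 2 + 2.
Proof. by move=> y_neq0; rewrite /dcos; field. Qed.

Lemma dcos_cube (F : fieldType) (y : F) : y != 0 ->
  dcos y ^+ 3 = y ^+ 3 + y^-1 ^+ 3 + 3 * dcos y.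
Proof. by move=> y_neq0; rewrite /dcos; field. Qed.

Section UnitCircle.
Variables (C : numClosedFieldType) (n : nat) (z : C).
Hypotheses (n_gt0 : (0 < n)%N) (zn : z ^+ n = 1).

Lemma norm_unity_root : `|z| = 1.
Proof.
by apply/eqP; rewrite -(pexpr_eq1 n_gt0) // -normrX zn normr1.
Qed.

Lemma dcos_Re : dcos z = 2 * 'Re z.
Proof.
rewrite ReE /dcos invC_norm norm_unity_root expr1n invr1 mul1r.
by rewrite mulrC divfK // pnatr_eq0.
Qed.

Lemma dcos_real : dcos z \is Num.real.
Proof. by rewrite dcos_Re rpredM ?Creal_Re ?realn. Qed.

Lemma norm_dcos : `|dcos z| <= 2.
Proof.
rewrite dcos_Re normrM ger0_norm ?ler0n // -[leRHS]mulr1 ler_pM2l ?ltr0n //.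
by rewrite -norm_unity_root (leif_normC_Re_Creal z).1.
Qed.

Lemma dcos_bounds : -2 <= dcos z <= 2.
Proof. by rewrite -real_ler_norml ?dcos_real ?norm_dcos. Qed.

End UnitCircle.

Section BoundedFamilies.
Variable R : numFieldType.

Lemma le_two_thirds_or_eq2 (s t : R) : s <= 2 -> -2 <= t <= 2 ->
  (1 - s) * (1 - t) = 1 -> s <= 2/3 \/ s = 2 /\ t = 2.
Proof.
move=> s_le /andP[t_ge t_le] st1.
have x_ge : -1 <= 1 - s by rewrite -subr_ge0 (_ : _ - _ = 2 - s) ?subr_ge0 //; ring.
have y_ge : -1 <= 1 - t by rewrite -subr_ge0 (_ : _ - _ = 2 - t) ?subr_ge0 //; ring.
have y_le : 1 - t <= 3.
  by rewrite -subr_ge0 (_ : _ - _ = t + 2) ?subr_ge0 -?lerBlDr ?sub0r //; ring.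
have x_real : 1 - s \is Num.real by rewrite -(ler_real x_ge) realN ?realn.
have [x_le0 | x_gt0] := real_le0P x_real; last first.
  left; have : (1 - s) * (1 - t) <= (1 - s) * 3 by rewrite ler_pM2l.
  rewrite st1 -ler_pdivrMr ?ltr0n // lerBrDl -lerBrDr.
  by rewrite (_ : 1 - 1/3 = 2/3 :> R) //; field.
have x_lt0 : 1 - s < 0.
  by rewrite lt_neqAle x_le0 andbT; apply: contra_eq_neq st1 => ->; rewrite mul0r eq_sym oner_eq0.
have : (1 - s) * (1 - t) <= (1 - s) * -1 by rewrite ler_nM2l.
rewrite st1 mulrN1 lerNr => x_le; have x_eq : 1 - s = -1 by apply/eqP; rewrite eq_le x_le.
move: st1; rewrite x_eq mulN1r => /eqP; rewrite eqr_oppLR => /eqP y_eq.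
have one_sub_K (r : R) : r = 1 - (1 - r) by rewrite opprB addrC subrK.
by right; rewrite (one_sub_K s) (one_sub_K t) x_eq y_eq opprK.
Qed.

Lemma sum_sqr_le_of_le_two_thirds p (s : 'I_p -> R) :
  (forall j, -2 <= s j <= 2/3) -> \sum_j s j = 0 -> \sum_j s j ^+ 2 <= 4/3 * p%:R.
Proof.
move=> s_bnd s_sum0; rewrite -subr_ge0.
have -> : 4/3 * p%:R - \sum_j s j ^+ 2 = \sum_j (s j + 2) * (2/3 - s j).
  rewrite [RHS](eq_bigr (fun j => 4/3 - 4/3 * s j - s j ^+ 2)); last by move=> j _; field.
  by rewrite !sumrB sumr_const card_ord -mulr_sumr s_sum0 mulr0 subr0 mulr_natr.
apply: sumr_ge0 => j _; have /andP[s_ge s_le] := s_bnd j.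
by rewrite mulr_ge0 ?subr_ge0 // -lerBlDr sub0r.
Qed.

(* Summed over a family, this cubic weight involves only the first three power sums. *)
Lemma cubic_weight_bounds (x : R) : -2 <= x <= 2 ->
  - (64/3) <= (2/3 - x) * (x + 2) ^+ 2 /\ (x <= 2/3 -> 0 <= (2/3 - x) * (x + 2) ^+ 2).
Proof.
move=> /andP[x_ge x_le]; have a_ge0 : 0 <= x + 2 by rewrite -lerBlDr sub0r.
split=> [|x_le23]; last by rewrite mulr_ge0 ?subr_ge0 ?exprn_ge0.
have sq_le : (x + 2) ^+ 2 <= 16.
  rewrite (_ : 16 = 4 ^+ 2 :> R); last by rewrite -natrX.
  by rewrite ler_pXn2r ?nnegrE ?ler0n // -lerBrDr (_ : 4 - 2 = 2 :> R) //; ring.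
apply: (@le_trans _ _ (- (4/3) * (x + 2) ^+ 2)).
  rewrite mulNr lerN2 (_ : 64/3 = 4/3 * 16 :> R); last by field.
  by rewrite ler_pM2l // divr_gt0 ?ltr0n.
rewrite ler_wpM2r ?exprn_ge0 // -subr_ge0 (_ : 2/3 - x - - (4/3) = 2 - x) ?subr_ge0 //.
by field.
Qed.

Lemma sum_sqr_le_of_le_two_thirds_but_one p (s : 'I_p -> R) j0 :
  (forall j, -2 <= s j <= 2) -> (forall j, j != j0 -> s j <= 2/3) ->
  \sum_j s j = 0 -> \sum_j s j ^+ 3 = 0 -> \sum_j s j ^+ 2 <= (4 * p + 32)%:R / 5.
Proof.
move=> s_bnd s_le s_sum0 s_sum3.
have weight_sum : \sum_j (2/3 - s j) * (s j + 2) ^+ 2 =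
    8/3 * p%:R - 10/3 * \sum_j s j ^+ 2.
  rewrite [LHS](eq_bigr (fun j => 8/3 - 4/3 * s j - 10/3 * s j ^+ 2 - s j ^+ 3)); last first.
    by move=> j _; field.
  by rewrite !sumrB sumr_const card_ord -!mulr_sumr s_sum0 s_sum3 mulr0 !subr0 mulr_natr.
have : - (64/3) <= \sum_j (2/3 - s j) * (s j + 2) ^+ 2.
  rewrite (bigD1 j0) //= -[leLHS]addr0; apply: lerD; first exact: (cubic_weight_bounds _).1.
  by apply: sumr_ge0 => j j_neq; apply: (cubic_weight_bounds (s_bnd j)).2; apply: s_le.
rewrite weight_sum -subr_ge0 => h; rewrite -subr_ge0.
have -> : (4 * p + 32)%:R / 5 - \sum_j s j ^+ 2 =
    3/10 * (8/3 * p%:R - 10/3 * \sum_j s j ^+ 2 - - (64/3)).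
  by rewrite natrD natrM; field.
by rewrite mulr_ge0 // divr_ge0 ?ler0n.
Qed.

End BoundedFamilies.

Section CosetSums.
Variables (F : fieldType) (z : F) (p t : nat).
Hypotheses (p_prime : prime p) (zpt : z ^+ (p * t) = 1) (zt_neq1 : z ^+ t != 1).

Let y (j : 'I_p) := z ^+ (1 + j * t).

Let y_neq0 j : y j != 0.
Proof.
have t_gt0 : (0 < t)%N by rewrite lt0n; apply: contra_neq zt_neq1 => ->.
by rewrite expf_neq0 // (unity_root_neq0 _ zpt) // muln_gt0 prime_gt0.
Qed.

Let sum_coset_expr_inv k : coprime k p -> \sum_j y j ^+ k + \sum_j (y j)^-1 ^+ k = 0.
Proof.
move=> co_kp; rewrite sum_coset_expr // add0r.
rewrite (eq_bigr (fun j : 'I_p => z^-1 ^+ (1 + j * t) ^+ k)) => [|j _]; last first.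
  by rewrite [in RHS]exprVn.
by rewrite sum_coset_expr ?exprVn ?zpt ?invr1 ?invr_eq1.
Qed.

Lemma coset_sum_dcos : \sum_j dcos (y j) = 0.
Proof.
rewrite -[RHS](sum_coset_expr_inv (coprime1n p)) -big_split /=.
by apply: eq_bigr => j _; rewrite !expr1.
Qed.

Lemma coset_sum_dcos_sqr : odd p -> \sum_j dcos (y j) ^+ 2 = 2 * p%:R.
Proof.
move=> p_odd; rewrite (eq_bigr _ (fun j _ => dcos_sqr (y_neq0 j))).
rewrite !big_split /= sum_coset_expr_inv ?coprime2n // add0r.
by rewrite sumr_const card_ord -mulr2n mulr_natl.
Qed.

Lemma coset_sum_dcos_cube : p != 3%N -> \sum_j dcos (y j) ^+ 3 = 0.
Proof.
move=> p_neq3; rewrite (eq_bigr _ (fun j _ => dcos_cube (y_neq0 j))).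
rewrite !big_split /= sum_coset_expr_inv ?add0r; last first.
  by rewrite prime_coprime // dvdn_prime2 // eq_sym.
by rewrite -mulr_sumr coset_sum_dcos mulr0.
Qed.

End CosetSums.

Lemma coprime_add1_mul j t : coprime (1 + j * t) t.
Proof. by rewrite /coprime gcdnC addnC gcdnMDl gcdn1. Qed.

Lemma uniq_dvdn_add1_mul p t (j j' : 'I_p) : coprime p t ->
  (p %| 1 + j * t)%N -> (p %| 1 + j' * t)%N -> j = j'.
Proof.
move=> co_pt; wlog le_j'j : j j' / (j' <= j)%N => [hwlog|].
  by case: (leqP j' j) => [|/ltnW] /hwlog hj dj dj'; [apply: hj | apply/esym/hj].
move=> dj dj'; apply: val_inj; apply/eqP; rewrite eqn_leq le_j'j andbT -subn_eq0.
have : (p %| j - j')%N by rewrite -(Gauss_dvdl _ co_pt) mulnBl -(subnDl 1) dvdn_sub.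
apply: contraTT; rewrite -lt0n => pos; apply/negP => /(dvdn_leq pos).
by rewrite leqNgt (leq_ltn_trans (leq_subr _ _) (ltn_ord j)).
Qed.

(* The Galois conjugates of an m-th root of unity z are among the z ^+ k, k coprime to m. *)
Definition small_conjugates (C : numClosedFieldType) m (z : C) :=
  forall k, coprime k m -> dcos (z ^+ k) <= 2/3.

Section SmallConjugates.
Variables (C : numClosedFieldType) (z : C) (p t : nat).
Hypotheses (p_prime : prime p) (zpt : z ^+ (p * t) = 1).
Hypothesis z_small : small_conjugates (p * t) z.

Let s (j : 'I_p) := dcos (z ^+ (1 + j * t)).

Let s_bounds (zt_neq1 : z ^+ t != 1) j : -2 <= s j <= 2.
Proof.
have t_gt0 : (0 < t)%N by rewrite lt0n; apply: contra_neq zt_neq1 => ->.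
rewrite /s; apply: (dcos_bounds (n := p * t)); first by rewrite muln_gt0 prime_gt0.
by rewrite exprAC zpt expr1n.
Qed.

Let s_small (j : 'I_p) : coprime (1 + j * t) p -> s j <= 2/3.
Proof. by move=> co_p; apply: z_small; rewrite coprimeMr co_p coprime_add1_mul. Qed.

Lemma small_conjugates_sq : odd p -> (p %| t)%N -> z ^+ t = 1.
Proof.
move=> p_odd p_dvd_t; have [//|zt_neq1] := eqVneq (z ^+ t) 1; exfalso.
have s_bnd j : -2 <= s j <= 2/3.
  rewrite (andP (s_bounds zt_neq1 j)).1 s_small //.
  exact: coprime_dvdr p_dvd_t (coprime_add1_mul j t).
have := sum_sqr_le_of_le_two_thirds s_bnd (coset_sum_dcos p_prime zpt zt_neq1).
rewrite coset_sum_dcos_sqr // ler_pM2r ?ltr0n ?prime_gt0 //.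
by rewrite ler_pdivlMr ?ltr0n // -natrM ler_nat.
Qed.

Lemma small_conjugates_simple : (6 < p)%N -> coprime p t -> z ^+ t = 1.
Proof.
move=> p_gt6 co_pt; have [//|zt_neq1] := eqVneq (z ^+ t) 1; exfalso.
(* 1 + j t is coprime to p for all j but at most one. *)
have [j0 s_le] : exists j0, forall j, j != j0 -> s j <= 2/3.
  have [j0 dj0 | no_bad] := pickP (fun j : 'I_p => p %| 1 + j * t)%N.
    exists j0 => j j_neq; rewrite s_small // coprime_sym prime_coprime //.
    by apply: contra_neqN j_neq => dj; apply: uniq_dvdn_add1_mul co_pt dj dj0.
  exists (Ordinal (prime_gt0 p_prime)) => j _.
  by rewrite s_small // coprime_sym prime_coprime // no_bad.
have p_neq3 : p != 3%N by apply: contraTneq p_gt6 => ->.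
have p_odd : odd p by case: (even_prime p_prime) p_gt6 => [->|].
have := sum_sqr_le_of_le_two_thirds_but_one (s_bounds zt_neq1) s_le
  (coset_sum_dcos p_prime zpt zt_neq1) (coset_sum_dcos_cube p_prime zpt zt_neq1 p_neq3).
rewrite coset_sum_dcos_sqr // ler_pdivlMr ?ltr0n // -!natrM ler_nat.
by lia.
Qed.

End SmallConjugates.

Lemma exists_reducing_prime m : (0 < m)%N -> ~~ (4 %| m)%N -> ~~ (5 %| m)%N ->
    ~~ (m %| 6)%N ->
  exists p t, [/\ prime p, m = (p * t)%N & ((odd p && (p %| t)) || (6 < p) && coprime p t)%N].
Proof.
move=> m_gt0 n4 n5 m_ndvd6; set g := gcdn m 6; set n := (m %/ g)%N.
have mE : m = (n * g)%N by rewrite divnK ?dvdn_gcdl.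
have n_gt1 : (1 < n)%N.
  rewrite ltn_neqAle lt0n; apply/andP; split.
    by apply: contra m_ndvd6 => /eqP n1; rewrite mE -n1 mul1n dvdn_gcdr.
  by apply: contraTneq m_gt0 => n0; rewrite mE n0.
have p_prime := pdiv_prime n_gt1; set p := pdiv n in p_prime *.
have p_dvd_m : (p %| m)%N by rewrite mE dvdn_mulr ?pdiv_dvd.
have mpE : m = (p * (m %/ p))%N by rewrite mulnC divnK.
have sq_dvd : (p %| 6)%N -> (p * p %| m)%N.
  by move=> p6; rewrite mE dvdn_mul ?pdiv_dvd // dvdn_gcd p_dvd_m.
have /or4P[p2 | p3 | p5 | p_gt6] : [|| p == 2, p == 3, p == 5 | 6 < p]%N.
  by case: (p) p_prime => [|[|[|[|[|[|[|q]]]]]]].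
- by rewrite (eqP p2) in sq_dvd; case/negP: n4; apply: sq_dvd.
- exists 3%N, (m %/ 3)%N; rewrite -(eqP p3); split => //.
  by rewrite dvdn_divRL ?sq_dvd // (eqP p3).
- by move: n5; rewrite -(eqP p5) p_dvd_m.
exists p, (m %/ p)%N; split => //; rewrite p_gt6 /=.
have p_odd : odd p by case: (even_prime p_prime) p_gt6 => [->|].
by rewrite p_odd /= prime_coprime // dvdn_divRL; case: (p * p %| m)%N.
Qed.

Lemma dcos_root6 (R : numFieldType) (z : R) : z ^+ 6 = 1 -> dcos z <= 2/3 ->
  dcos z = -2 \/ dcos z = -1.
Proof.
move=> z6 z_small; have z_neq0 : z != 0 by apply: (unity_root_neq0 _ z6).
have two_thirds_lt1 : 2/3 < 1 :> R by rewrite ltr_pdivrMr ?ltr0n // mul1r ltr_nat.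
have dcosM : dcos z * z = z ^+ 2 + 1 by rewrite mulrDl mulVf // expr2.
have factor6 : (z - 1) * (z + 1) * (z ^+ 2 + z + 1) * (z ^+ 2 - z + 1) = z ^+ 6 - 1.
  by ring.
have : (z - 1) * (z + 1) * (z ^+ 2 + z + 1) * (z ^+ 2 - z + 1) == 0.
  by rewrite factor6 z6 subrr.
have dcos_lt1 : dcos z < 1 := le_lt_trans z_small two_thirds_lt1.
rewrite !mulf_eq0 -!orbA => /or4P[|||] /eqP root_eq.
- move: dcos_lt1; have -> : z = 1 by apply/eqP; rewrite -subr_eq0 root_eq.
  by rewrite /dcos invr1 -mulr2n ltrn1.
- have -> : z = -1 by apply/eqP; rewrite -addr_eq0 root_eq.
  by left; rewrite /dcos invrN1; ring.
- right; apply: (mulIf z_neq0); rewrite dcosM.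
  have -> : z ^+ 2 + 1 = z ^+ 2 + z + 1 - z by ring.
  by rewrite root_eq; ring.
- have dcos1 : dcos z = 1.
    apply: (mulIf z_neq0); rewrite dcosM.
    have -> : z ^+ 2 + 1 = z ^+ 2 - z + 1 + z by ring.
    by rewrite root_eq; ring.
  by move: dcos_lt1; rewrite dcos1 ltxx.
Qed.

Lemma not_mode1_root6 (R : numFieldType) (z w : R) : z ^+ 6 = 1 -> w ^+ 6 = 1 ->
  dcos z <= 2/3 -> dcos w <= 2/3 -> ~ mode1 z w.
Proof.
move=> z6 w6 /(dcos_root6 z6) dz /(dcos_root6 w6) dw; rewrite /mode1.
have ne1 n : (n != 1)%N -> n%:R != 1 :> R by move=> n1; rewrite pnatr_eq1.
case: dz dw => -> [] -> /eqP; apply/negP.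
- by rewrite (_ : _ * _ = 9%:R) ?ne1 //; ring.
- by rewrite (_ : _ * _ = 6%:R) ?ne1 //; ring.
- by rewrite (_ : _ * _ = 6%:R) ?ne1 //; ring.
- by rewrite (_ : _ * _ = 4%:R) ?ne1 //; ring.
Qed.

Lemma prim_root_neq1 (R : nzRingType) n (z : R) : (1 < n)%N -> n.-primitive_root z -> z != 1.
Proof.
by move=> n_gt1 z_prim; rewrite -[z]expr1 -(prim_order_dvd z_prim) dvdn1 neq_ltn n_gt1 orbT.
Qed.

Lemma mode1_prim4 (F : fieldType) (z : F) : 4.-primitive_root z -> mode1 z z.
Proof.
move=> z_prim; have z4 := prim_expr_order z_prim.
have z_neq0 : z != 0 by apply: (unity_root_neq0 _ z4).
have z2 : z ^+ 2 = -1.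
  have : (z ^+ 2) ^+ 2 == 1 by rewrite -exprM z4.
  by rewrite sqrf_eq1 -(prim_order_dvd z_prim) /= => /eqP.
have : dcos z = 0 by apply: (mulIf z_neq0); rewrite /dcos mulrDl mulVf // -expr2 z2 mul0r addNr.
by rewrite /mode1 => ->; rewrite subr0 mulr1.
Qed.

Lemma mode1_prim5 (F : fieldType) (z : F) : 5.-primitive_root z -> mode1 z (z ^+ 2).
Proof.
move=> z_prim; have z5 := prim_expr_order z_prim.
have z_neq0 : z != 0 by apply: (unity_root_neq0 _ z5).
have zV : z^-1 = z ^+ 4 by apply: (mulfI z_neq0); rewrite mulfV // -exprS z5.
have z2V : (z ^+ 2)^-1 = z ^+ 3.
  by rewrite -exprVn zV -exprM (_ : 4 * 2 = 5 + 3)%N // exprD z5 mul1r.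
rewrite /mode1 /dcos zV z2V.
have -> : (1 - (z + z ^+ 4)) * (1 - (z ^+ 2 + z ^+ 3)) = 1 + (z + z ^+ 2) * (z ^+ 5 - 1) by ring.
by rewrite z5 subrr mulr0 addr0.
Qed.

Lemma mode1_exp m (z w : algC) k : z ^+ m = 1 -> w ^+ m = 1 -> coprime k m ->
  mode1 z w -> mode1 (z ^+ k) (w ^+ k).
Proof.
move=> zm wm co_km; have [u uE] := Qn_aut_exists co_km.
move/(congr1 u); rewrite /mode1 /dcos rmorph1 rmorphM !rmorphB !rmorphD !rmorph1.
by rewrite !fmorphV /= !uE.
Qed.

Lemma mode1_small_conjugates m (z w : algC) : (0 < m)%N -> z ^+ m = 1 -> w ^+ m = 1 ->
  mode1 z w -> (z, w) != (1, 1) -> small_conjugates m z.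
Proof.
move=> m_gt0 zm wm zw zw_neq1 k co_km.
have rootX (x : algC) : x ^+ m = 1 -> x ^+ k ^+ m = 1 by move=> xm; rewrite exprAC xm expr1n.
have [//|[zk2 wk2]] := le_two_thirds_or_eq2 (andP (dcos_bounds m_gt0 (rootX z zm))).2
  (dcos_bounds m_gt0 (rootX w wm)) (mode1_exp zm wm co_km zw).
have root_eq1 (x : algC) : x ^+ m = 1 -> dcos (x ^+ k) = 2 -> x = 1.
  move=> xm xk2; apply: (unity_root_coprime co_km _ xm).
  exact: dcos_eq2 (unity_root_neq0 m_gt0 (rootX x xm)) xk2.
by rewrite (root_eq1 z zm zk2) (root_eq1 w wm wk2) eqxx in zw_neq1.
Qed.

Lemma mode1_unity_roots_eq1 m (z w : algC) : (0 < m)%N -> ~~ (4 %| m)%N -> ~~ (5 %| m)%N ->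
  z ^+ m = 1 -> w ^+ m = 1 -> mode1 z w -> (z, w) = (1, 1).
Proof.
elim/ltn_ind: m z w => m IH z w m_gt0 n4 n5 zm wm zw; apply/eqP/contraT => zw_neq1.
have z_small := mode1_small_conjugates m_gt0 zm wm zw zw_neq1.
have w_small : small_conjugates m w.
  apply: mode1_small_conjugates m_gt0 wm zm (mode1_sym zw) _.
  by apply: contra_neq zw_neq1 => -[-> ->].
have [m_dvd6 | m_ndvd6] := boolP (m %| 6)%N.
  have := z_small 1%N (coprime1n m); have := w_small 1%N (coprime1n m); rewrite !expr1.
  move=> w_le z_le; have z6 := expr_dvd zm m_dvd6; have w6 := expr_dvd wm m_dvd6.
  by case: (not_mode1_root6 z6 w6 z_le w_le).
have [p [t [p_prime mE p_red]]] := exists_reducing_prime m_gt0 n4 n5 m_ndvd6.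
have reduce (x : algC) : x ^+ m = 1 -> small_conjugates m x -> x ^+ t = 1.
  rewrite mE => xm x_small; case/orP: p_red => /andP[p_cond1 p_cond2].
  - exact: small_conjugates_sq p_cond1 p_cond2.
  - exact: small_conjugates_simple p_cond1 p_cond2.
have t_dvd_m : (t %| m)%N by rewrite mE dvdn_mull.
have t_gt0 : (0 < t)%N by move: m_gt0; rewrite mE muln_gt0 => /andP[].
have t_lt_m : (t < m)%N by rewrite mE ltn_Pmull ?prime_gt1.
have ndvd d : ~~ (d %| m)%N -> ~~ (d %| t)%N by apply: contra => /dvdn_trans; apply.
by rewrite (IH t t_lt_m z w t_gt0 (ndvd _ n4) (ndvd _ n5) (reduce z zm z_small)
  (reduce w wm w_small) zw) eqxx in zw_neq1.
Qed.

(** * Discrete Fourier transform on Z_m *)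

Section DFT.
Variables (F : fieldType) (m : nat).

Definition dft (h : 'I_m -> F) (x : F) := \sum_(i < m) h i * x ^+ i.

Definition dft2 (H : 'I_m -> 'I_m -> F) (z w : F) := dft (fun i => dft (H i) w) z.

Lemma eq_dft (h1 h2 : 'I_m -> F) x : h1 =1 h2 -> dft h1 x = dft h2 x.
Proof. by move=> eq_h; apply: eq_bigr => i _; rewrite eq_h. Qed.

Lemma dftD (h1 h2 : 'I_m -> F) x : dft (fun i => h1 i + h2 i) x = dft h1 x + dft h2 x.
Proof. by rewrite /dft -big_split; apply: eq_bigr => i _; rewrite mulrDl. Qed.

Lemma dftZ c (h : 'I_m -> F) x : dft (fun i => c * h i) x = c * dft h x.
Proof. by rewrite /dft mulr_sumr; apply: eq_bigr => i _; rewrite mulrA. Qed.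

Lemma expr_ordS (x : F) (i : 'I_m) : x ^+ m = 1 -> x ^+ ordS i = x * x ^+ i.
Proof. by move=> xm; rewrite /= expr_mod // exprS. Qed.

Lemma expr_ord_pred (x : F) (i : 'I_m) : x ^+ m = 1 -> x ^+ ord_pred i = x^-1 * x ^+ i.
Proof.
move=> xm; have m_gt0 : (0 < m)%N by apply: leq_ltn_trans (ltn_ord i).
have x_neq0 := unity_root_neq0 m_gt0 xm.
rewrite /= expr_mod //; apply: (mulfI x_neq0); rewrite mulrA mulfV // mul1r -exprS.
by rewrite prednK ?addn_gt0 ?m_gt0 ?orbT // exprD xm mulr1.
Qed.

Lemma dft_ord_pred (h : 'I_m -> F) x : x ^+ m = 1 ->
  dft (fun i => h (ord_pred i)) x = x * dft h x.
Proof.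
move=> xm; rewrite /dft (reindex_inj (@ordS_inj m)) mulr_sumr.
by apply: eq_bigr => i _; rewrite ordSK expr_ordS // mulrCA.
Qed.

Lemma dft_ordS (h : 'I_m -> F) x : x ^+ m = 1 ->
  dft (fun i => h (ordS i)) x = x^-1 * dft h x.
Proof.
move=> xm; rewrite /dft (reindex_inj (@ord_pred_inj m)) mulr_sumr.
by apply: eq_bigr => i _; rewrite ord_predK expr_ord_pred // mulrCA.
Qed.

Lemma eq_dft2 (H1 H2 : 'I_m -> 'I_m -> F) z w :
  (forall i j, H1 i j = H2 i j) -> dft2 H1 z w = dft2 H2 z w.
Proof. by move=> eqH; apply: eq_dft => i; apply: eq_dft => j; apply: eqH. Qed.

Lemma dft2D (H1 H2 : 'I_m -> 'I_m -> F) z w :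
  dft2 (fun i j => H1 i j + H2 i j) z w = dft2 H1 z w + dft2 H2 z w.
Proof. by rewrite /dft2 -dftD; apply: eq_dft => i; rewrite dftD. Qed.

Lemma dft2_ord_pred_l (H : 'I_m -> 'I_m -> F) z w : z ^+ m = 1 ->
  dft2 (fun i j => H (ord_pred i) j) z w = z * dft2 H z w.
Proof. exact: (dft_ord_pred (fun i => dft (H i) w)). Qed.

Lemma dft2_ordS_l (H : 'I_m -> 'I_m -> F) z w : z ^+ m = 1 ->
  dft2 (fun i j => H (ordS i) j) z w = z^-1 * dft2 H z w.
Proof. exact: (dft_ordS (fun i => dft (H i) w)). Qed.

Lemma dft2_ord_pred_r (H : 'I_m -> 'I_m -> F) z w : w ^+ m = 1 ->
  dft2 (fun i j => H i (ord_pred j)) z w = w * dft2 H z w.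
Proof. by move=> wm; rewrite /dft2 -dftZ; apply: eq_dft => i; apply: dft_ord_pred. Qed.

Lemma dft2_ordS_r (H : 'I_m -> 'I_m -> F) z w : w ^+ m = 1 ->
  dft2 (fun i j => H i (ordS j)) z w = w^-1 * dft2 H z w.
Proof. by move=> wm; rewrite /dft2 -dftZ; apply: eq_dft => i; apply: dft_ordS. Qed.

Section Inversion.
Variable zeta : F.
Hypothesis zeta_prim : m.-primitive_root zeta.

Let m_neq0 : m%:R != 0 :> F := prim_root_natf_neq0 zeta_prim.

Lemma sum_prim_root_expr (i i' : 'I_m) :
  \sum_(a < m) (zeta ^+ a) ^+ i * ((zeta ^+ a) ^+ i')^-1 = if i == i' then m%:R else 0.
Proof.
have zm := prim_expr_order zeta_prim.
have zeta_neq0 := unity_root_neq0 (prim_order_gt0 zeta_prim) zm.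
set x := zeta ^+ i / zeta ^+ i'.
rewrite (eq_bigr (fun a : 'I_m => x ^+ a)) => [|a _]; last first.
  by rewrite /x exprMn exprVn -!exprM !(mulnC a) !exprM.
have [eq_ii'|neq_ii'] := eqVneq i i'.
  rewrite /x eq_ii' mulfV ?expf_neq0 //.
  by under eq_bigr do rewrite expr1n; rewrite sumr_const card_ord.
rewrite sum_expr_unity_root //.
  by rewrite exprMn exprVn -!exprM !(mulnC _ m) !exprM zm !expr1n invr1 mulr1.
rewrite /x -(inj_eq (mulIf (expf_neq0 i' zeta_neq0))) divfK ?expf_neq0 // mul1r.
by rewrite (eq_prim_root_expr zeta_prim) !modn_small.
Qed.

Lemma dft_inversion (h : 'I_m -> F) (i : 'I_m) :
  \sum_(a < m) dft h (zeta ^+ a) * ((zeta ^+ a) ^+ i)^-1 = m%:R * h i.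
Proof.
rewrite (eq_bigr (fun a : 'I_m => \sum_(j < m) h j * ((zeta ^+ a) ^+ j * ((zeta ^+ a) ^+ i)^-1)));
  last by move=> a _; rewrite /dft mulr_suml; apply: eq_bigr => j _; rewrite mulrA.
rewrite exchange_big /= (eq_bigr (fun j : 'I_m => h j * (if j == i then m%:R else 0)));
  last by move=> j _; rewrite -mulr_sumr sum_prim_root_expr.
rewrite (bigD1 i) //= big1 ?addr0 => [|j /negbTE ->]; last by rewrite mulr0.
by rewrite eqxx mulrC.
Qed.

Lemma dft_eq0 (h : 'I_m -> F) : (forall a : 'I_m, dft h (zeta ^+ a) = 0) -> forall i, h i = 0.
Proof.
move=> h0 i; apply: (mulfI m_neq0); rewrite mulr0 -dft_inversion.
by rewrite big1 // => a _; rewrite h0 mul0r.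
Qed.

Lemma dft_const (h : 'I_m -> F) :
  (forall a : 'I_m, (0 < a)%N -> dft h (zeta ^+ a) = 0) -> forall i j, h i = h j.
Proof.
move=> h0 i j; apply: (mulfI m_neq0); rewrite -!dft_inversion.
apply: eq_bigr => a _; have [a0|/h0 ->] := posnP a; last by rewrite !mul0r.
by rewrite a0 !expr0 !expr1n.
Qed.

Lemma dft2_const (H : 'I_m -> 'I_m -> F) :
    (forall a b : 'I_m, (0 < a)%N || (0 < b)%N -> dft2 H (zeta ^+ a) (zeta ^+ b) = 0) ->
  forall i j i' j', H i j = H i' j'.
Proof.
move=> H0; have row_const i j j' : H i j = H i j'.
  apply: dft_const => b b_gt0; apply: (@dft_eq0 (fun i => dft (H i) (zeta ^+ b))) => a.
  by apply: H0; rewrite b_gt0 orbT.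
have col_const i i' j : H i j = H i' j.
  have sum_row k : dft (H k) 1 = m%:R * H k j.
    rewrite /dft (eq_bigr (fun=> H k j)) => [|j' _].
      by rewrite sumr_const card_ord mulr_natl.
    by rewrite expr1n mulr1 (row_const k j' j).
  apply: (mulfI m_neq0); rewrite -!sum_row.
  apply: (@dft_const (fun k => dft (H k) 1)) => a a_gt0.
  by apply: (H0 a (Ordinal (prim_order_gt0 zeta_prim))); rewrite a_gt0.
by move=> i j i' j'; rewrite (row_const i j j') (col_const i i' j').
Qed.

End Inversion.
End DFT.

(** * Eigenfunctions of T_m *)

Section Graph.
Variable m : nat.
Hypothesis m_ge3 : (3 <= m)%N.
Local Notation V := (Tvert m).

Definition vprev (v : V) : V := let: (s, i, j) := v in (s, i, ord_pred j).
Definition vnext (v : V) : V := let: (s, i, j) := v in (s, i, ordS j).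
Definition vswap (v : V) : V := let: (s, i, j) := v in (~~ s, j, i).

Lemma Tadj_neighbours (u v : V) : Tadj u v = (u \in [:: vprev v; vnext v; vswap v]).
Proof.
have eqS_pred (j j' : 'I_m) : (j == ordS j') = (j' == ord_pred j).
  by apply/eqP/eqP => ->; [rewrite ordSK | rewrite ord_predK].
case: u => [[s' i'] j']; case: v => [[s i] j].
rewrite /Tadj /Tgen !inE !xpair_eqE eqS_pred.
by case: s; case: s' => /=; rewrite ?andbT ?andbF ?orbF ?andbT /= ?[i == i']eq_sym //;
  rewrite [i == j']eq_sym [j == i']eq_sym andbC.
Qed.

Lemma ord_pred_neq_ordS (j : 'I_m) : ord_pred j != ordS j.
Proof.
apply/eqP => /(congr1 (@ordS m)); rewrite ord_predK => /(congr1 val) /= j_eq.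
have : (j + 0 == j + 2 %[mod m])%N.
  by rewrite addn0 {1}j_eq modn_mod -addn1 modnDml -addn1 -addnA.
by rewrite eqn_modDl mod0n modn_small.
Qed.

Lemma uniq_neighbours (v : V) : uniq [:: vprev v; vnext v; vswap v].
Proof.
case: v => [[s i] j]; rewrite /= !inE !xpair_eqE !eqxx (negbTE (ord_pred_neq_ordS j)) /=.
by case: s.
Qed.

Definition eigfun1 (phi : V -> algC) :=
  forall v, phi (vprev v) + phi (vnext v) + phi (vswap v) = phi v.

Definition rowfun (phi : V -> algC) : 'rV[algC]_#|V| := \row_a phi (enum_val a).

Lemma rowfunK (x : 'rV[algC]_#|V|) : x = rowfun (fun v => x 0 (enum_rank v)).
Proof. by apply/rowP => a; rewrite mxE enum_valK. Qed.

Lemma rowfun_mulTmx (phi : V -> algC) v :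
  (rowfun phi *m Tmx m) 0 (enum_rank v) = phi (vprev v) + phi (vnext v) + phi (vswap v).
Proof.
rewrite mxE (reindex (@enum_rank V)) /=; last first.
  by exists enum_val => x _; [exact: enum_rankK | exact: enum_valK].
rewrite (eq_bigr (fun u => if u \in [:: vprev v; vnext v; vswap v] then phi u else 0)).
  by rewrite -big_mkcond -big_uniq ?uniq_neighbours // !big_cons big_nil /= addr0 addrA.
by move=> u _; rewrite !mxE !enum_rankK Tadj_neighbours; case: (_ \in _); rewrite ?mulr1 ?mulr0.
Qed.

Lemma eigenspace1P (phi : V -> algC) : (rowfun phi <= eigenspace (Tmx m) 1)%MS <-> eigfun1 phi.
Proof.
split=> [/eigenspaceP | phi_eig]; rewrite ?scale1r.
  by move=> /rowP eig v; have := eig (enum_rank v); rewrite rowfun_mulTmx mxE enum_rankK.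
apply/eigenspaceP; rewrite scale1r; apply/rowP => a.
by rewrite -[a]enum_valK rowfun_mulTmx phi_eig mxE enum_rankK.
Qed.

Definition signv (v : V) : algC := let: (s, _, _) := v in if s then 1 else -1.

Lemma signv_eigfun1 : eigfun1 signv.
Proof. by case=> [[[] i] j] /=; ring. Qed.

Lemma simple1P : simple_eigenvalue (Tmx m) 1 <->
  forall phi, eigfun1 phi -> exists c, forall v, phi v = c * signv v.
Proof.
have m_gt0 : (0 < m)%N by apply: ltn_trans m_ge3.
have signv_sub := proj2 (eigenspace1P signv) signv_eigfun1.
have rk_signv : \rank (rowfun signv) = 1%N.
  rewrite rank_rV; case: eqP => // /rowP /(_ (enum_rank (true, Ordinal m_gt0, Ordinal m_gt0))).
  by rewrite !mxE enum_rankK => /eqP; rewrite oner_eq0.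
split=> [rk1 phi /eigenspace1P phi_sub | signv_span].
  have := mxrank_leqif_sup signv_sub; rewrite rk1 rk_signv => -[_ /esym sub_signv].
  have /sub_rVP [c /rowP phiE] := submx_trans phi_sub sub_signv.
  by exists c => v; have := phiE (enum_rank v); rewrite !mxE enum_rankK.
have sub_signv : (eigenspace (Tmx m) 1 <= rowfun signv)%MS.
  apply/row_subP => a; have := row_sub a (eigenspace (Tmx m) 1).
  rewrite [row a _]rowfunK => /eigenspace1P/signv_span [c phiE].
  by apply/sub_rVP; exists c; apply/rowP => b; rewrite [LHS]mxE phiE !mxE.
by apply/eqP; rewrite -rk_signv eqn_leq !mxrankS.
Qed.

Definition mode_fun (z w : algC) (v : V) : algC :=
  let: (s, i, j) := v in if s then z ^+ i * w ^+ j else (1 - dcos w) * (z ^+ j * w ^+ i).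

Lemma mode_fun_eigfun1 (z w : algC) : z ^+ m = 1 -> w ^+ m = 1 -> mode1 z w ->
  eigfun1 (mode_fun z w).
Proof.
move=> zm wm zw [[[] i] j] /=; rewrite ?expr_ordS ?expr_ord_pred //; first by rewrite /dcos; ring.
have {}zw : (1 - dcos w) * (z + z^-1) + 1 = 1 - dcos w.
  have -> : (1 - dcos w) * (z + z^-1) = (1 - dcos w) - (1 - dcos z) * (1 - dcos w).
    by rewrite /dcos; ring.
  by rewrite zw subrK.
by rewrite -[in RHS]zw; ring.
Qed.

Lemma not_simple_of_mode1 (z w : algC) : z ^+ m = 1 -> w ^+ m = 1 -> mode1 z w -> z != 1 ->
  ~ simple_eigenvalue (Tmx m) 1.
Proof.
move=> zm wm zw z_neq1 /simple1P /(_ _ (mode_fun_eigfun1 zm wm zw)) [c modeE].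
have m_gt1 : (1 < m)%N by apply: ltnW.
have := modeE (true, Ordinal m_gt1, Ordinal (ltnW m_gt1)).
have := modeE (true, Ordinal (ltnW m_gt1), Ordinal (ltnW m_gt1)).
by rewrite /= !expr0 !expr1 !mulr1 => <- z_eq; rewrite z_eq eqxx in z_neq1.
Qed.

Definition plus_sheet (phi : V -> algC) i j := phi (true, i, j).
(* Transposed, so that x^+_{i,j} and its neighbour x^-_{j,i} share the index (i, j). *)
Definition minus_sheet (phi : V -> algC) i j := phi (false, j, i).

Section Eigenfunction.
Variables (phi : V -> algC) (z w : algC).
Hypotheses (phi_eig : eigfun1 phi) (zm : z ^+ m = 1) (wm : w ^+ m = 1).
Local Notation Fh := (dft2 (plus_sheet phi) z w).
Local Notation Gh := (dft2 (minus_sheet phi) z w).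

Lemma dft2_minus_sheet : Gh = (1 - dcos w) * Fh.
Proof.
have := @eq_dft2 _ _ (fun i j => plus_sheet phi i (ord_pred j) + plus_sheet phi i (ordS j)
  + minus_sheet phi i j) _ z w (fun i j => phi_eig (true, i, j)).
rewrite !dft2D dft2_ord_pred_r // dft2_ordS_r // => eqFh.
have -> : Gh = w * Fh + w^-1 * Fh + Gh - (w + w^-1) * Fh by ring.
by rewrite eqFh /dcos; ring.
Qed.

Lemma dft2_plus_sheet : Fh = (1 - dcos z) * Gh.
Proof.
have := @eq_dft2 _ _ (fun i j => minus_sheet phi (ord_pred i) j + minus_sheet phi (ordS i) j
  + plus_sheet phi i j) _ z w (fun i j => phi_eig (false, j, i)).
rewrite !dft2D dft2_ord_pred_l // dft2_ordS_l // => eqGh.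
have -> : Fh = z * Gh + z^-1 * Gh + Fh - (z + z^-1) * Gh by ring.
by rewrite eqGh /dcos; ring.
Qed.

Lemma eigfun1_mode1 : Fh != 0 -> mode1 z w.
Proof.
move=> Fh_neq0; apply: (mulIf Fh_neq0); rewrite mul1r -mulrA -dft2_minus_sheet.
exact/esym/dft2_plus_sheet.
Qed.

End Eigenfunction.

Lemma eigfun1_signv_multiple (phi : V -> algC) : ~~ (4 %| m)%N -> ~~ (5 %| m)%N ->
  eigfun1 phi -> exists c, forall v, phi v = c * signv v.
Proof.
move=> n4 n5 phi_eig; have m_gt0 : (0 < m)%N by apply: ltn_trans m_ge3.
have [zeta zeta_prim] := C_prim_root_exists m_gt0.
have rootX (a : 'I_m) : (zeta ^+ a) ^+ m = 1 by rewrite exprAC (prim_expr_order zeta_prim) expr1n.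
have expr_eq1 (a : 'I_m) : zeta ^+ a = 1 -> a = 0%N :> nat.
  move/eqP; rewrite -(prim_order_dvd zeta_prim); have := ltn_ord a.
  by case: (nat_of_ord a) => // a' lt_a'm /(dvdn_leq (ltn0Sn _)); rewrite leqNgt lt_a'm.
have plus_vanish (a b : 'I_m) : (0 < a)%N || (0 < b)%N ->
    dft2 (plus_sheet phi) (zeta ^+ a) (zeta ^+ b) = 0.
  move=> ab_gt0; apply/eqP; apply: contraLR ab_gt0.
  move=> /(eigfun1_mode1 phi_eig (rootX a) (rootX b)).
  by move=> /(mode1_unity_roots_eq1 m_gt0 n4 n5 (rootX a) (rootX b)) [/expr_eq1 -> /expr_eq1 ->].
have minus_vanish (a b : 'I_m) : (0 < a)%N || (0 < b)%N ->
    dft2 (minus_sheet phi) (zeta ^+ a) (zeta ^+ b) = 0.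
  by move=> ab_gt0; rewrite dft2_minus_sheet ?rootX // plus_vanish ?mulr0.
pose o : 'I_m := Ordinal m_gt0; exists (phi (true, o, o)).
have plus_const i j : phi (true, i, j) = phi (true, o, o).
  exact: (dft2_const zeta_prim plus_vanish i j o o : plus_sheet phi i j = _).
have minus_const i j : phi (false, i, j) = phi (false, o, o).
  exact: (dft2_const zeta_prim minus_vanish j i o o : minus_sheet phi j i = _).
have minus_o : phi (false, o, o) = - phi (true, o, o).
  have := phi_eig (true, o, o); rewrite /= (plus_const o (ord_pred o)) (plus_const o (ordS o)).
  move=> eq_o; rewrite -[LHS](addKr (phi (true, o, o) + phi (true, o, o))) eq_o.
  by ring.
by case=> [[[] i] j] /=; rewrite ?mulr1 ?plus_const // minus_const minus_o; ring.
Qed.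

End Graph.

Theorem theorem6p11 (m : nat) (hm : (3 <= m)%N) :
  simple_eigenvalue (Tmx m) 1%R <-> (~~ (4 %| m) && ~~ (5 %| m))%N.
Proof.
split=> [simple | /andP[n4 n5]]; last first.
  by apply/(simple1P hm) => phi; apply: eigfun1_signv_multiple.
have mode_obstruction d (z w : algC) : (1 < d)%N -> d.-primitive_root z -> w ^+ d = 1 ->
    mode1 z w -> ~~ (d %| m)%N.
  move=> d_gt1 z_prim wd zw; apply/negP => d_dvd_m.
  apply: (not_simple_of_mode1 hm _ _ zw (prim_root_neq1 d_gt1 z_prim) simple).
    exact: expr_dvd (prim_expr_order z_prim) d_dvd_m.
  exact: expr_dvd wd d_dvd_m.
have [i i_prim] := C_prim_root_exists (isT : (0 < 4)%N).
have [z z_prim] := C_prim_root_exists (isT : (0 < 5)%N).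
apply/andP; split.
  by apply: (mode_obstruction 4%N i i (isT : (1 < 4)%N) i_prim);
    [exact: prim_expr_order | exact: mode1_prim4].
apply: (mode_obstruction 5%N z (z ^+ 2) (isT : (1 < 5)%N) z_prim _ (mode1_prim5 z_prim)).
by rewrite exprAC (prim_expr_order z_prim) expr1n.
Qed.
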